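(* For all positive integers $k$ and $i$ with $1\le i\le k$, the sets $\Pi_{i,k}$ and $\Pi_{i,k}^c$ are minimal unavoidable sets.
   Context: For $\sigma\in S_n$, the cyclic permutation $[\sigma]$ is the set of all rotations of $\sigma$. For $\pi\in S_k$, the totally vincular pattern $\overline{\pi}$ is $\pi$ with all adjacent positions overlined; a cyclic permutation $[\sigma]$ of length $n\ge k$ contains $\overline{\pi}$ if some $k$ cyclically consecutive entries $\sigma_j\sigma_{j+1}\cdots\sigma_{j+k-1}$ (indices mod $n$) are order-isomorphic to $\pi$. $\overline{S_k}$ is the set of totally vincular patterns of length $k$. For $\Pi\subseteq\overline{S_k}$, $\mathrm{Av}_n[\Pi]$ is the set of cyclic permutations of length $n$ containing no pattern of $\Pi$. $\Pi$ is unavoidable if $|\mathrm{Av}_n[\Pi]|=0$ for all sufficiently large $n$, and avoidable otherwise; $\Pi$ is a minimal unavoidable set if it is unavoidable but every proper subset is avoidable. $\Pi_{i,k}$ is the set of all $\overline{\pi}\in\overline{S_k}$ with $\pi_i=1$, and $\Pi_{i,k}^c$ is the set of all $\overline{\pi}\in\overline{S_k}$ with $\pi_i=k$. *)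

From mathcomp Require Import all_boot all_fingroup.
Set Implicit Arguments. Unset Strict Implicit. Unset Printing Implicit Defensive.

(* Permutations of length n are elements of 'S_n (values 0..n-1, an
   order-preserving shift of 1..n, irrelevant for order-isomorphism). *)

Definition cyc_entry (n : nat) (s : 'S_n) (m : nat) : nat :=
  if insub (m %% n) is Some x then val (s x) else 0.

(* The cyclic permutation [s] contains the totally vincular pattern
   overline(p): n >= k and some k cyclically consecutive entries
   s_j ... s_{j+k-1} are order-isomorphic to p.  This depends only on
   the rotation class [s]. *)
Definition cyc_contains (k : nat) (p : 'S_k) (n : nat) (s : 'S_n) : Prop :=
  k <= n /\ exists j : 'I_n, forall a b : 'I_k,
    (cyc_entry s (j + a) < cyc_entry s (j + b)) = (p a < p b).

Definition cyc_avoids (k : nat) (Pi : {set 'S_k}) (n : nat) (s : 'S_n) : Prop :=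
  forall p, p \in Pi -> ~ cyc_contains p s.

Definition unavoidable (k : nat) (Pi : {set 'S_k}) : Prop :=
  exists N, forall n, N <= n -> forall s : 'S_n, ~ cyc_avoids Pi s.

Definition avoidable (k : nat) (Pi : {set 'S_k}) : Prop := ~ unavoidable Pi.

Definition minimal_unavoidable (k : nat) (Pi : {set 'S_k}) : Prop :=
  unavoidable Pi /\ forall Pi' : {set 'S_k}, Pi' \proper Pi -> avoidable Pi'.

(* Pi_{i,k}: patterns with pi_i = 1 (1-indexed position i, smallest value). *)
Definition Pi_min (k i : nat) : {set 'S_k} :=
  [set p : 'S_k | [exists a : 'I_k, (val a == i.-1) && (val (p a) == 0)]].

Definition Pi_max (k i : nat) : {set 'S_k} :=
  [set p : 'S_k | [exists a : 'I_k, (val a == i.-1) && (val (p a) == k.-1)]].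

(* For a cyclic permutation of length n >= k, the window of k
   cyclically consecutive entries that puts the entry 1 at its i-th place is
   order-isomorphic to a pattern of Pi_{i,k}, so Pi_{i,k} is unavoidable.  For
   minimality, given p in Pi_{i,k}, glue many blocks, each a copy of p followed
   by a separator, ordering the entries so that the i-th entries of all blocks
   are the smallest ones; a window whose minimum is at its i-th place must then
   start at a block boundary, so p is the only pattern of Pi_{i,k} it contains.
   Complementation x |-> n + 1 - x maps Pi_{i,k} onto Pi_{i,k}^c and preserves
   (minimal) unavoidability. *)

From mathcomp Require Import all_boot all_order all_fingroup zify.
Set Implicit Arguments. Unset Strict Implicit. Unset Printing Implicit Defensive.
Import Order.TTheory.

Lemma card_ord_ltn k c : c <= k -> #|[set v : 'I_k | v < c]| = c.
Proof.
move=> le_ck; have widen_inj : injective (widen_ord le_ck).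
  by move=> v w [] eq_vw; apply: val_inj.
rewrite -[RHS]card_ord -(card_imset _ widen_inj).
apply: eq_card => v; rewrite inE; apply/idP/imsetP => [lt_vc|[w _ ->]].
  by exists (Ordinal lt_vc) => //; apply: val_inj.
exact: (ltn_ord w).
Qed.

Lemma card_perm_ltn k (q : 'S_k) a : #|[set b | q b < q a]| = q a.
Proof.
rewrite -(card_imset _ (@perm_inj _ q)) -[RHS](card_ord_ltn (ltnW (ltn_ord (q a)))).
apply: eq_card => v; rewrite inE; apply/imsetP/idP => [[b] |lt_v].
  by rewrite inE => lt_b ->.
by exists (q^-1 v)%g; rewrite ?inE permKV.
Qed.

Lemma perm_ltn_inj k (p q : 'S_k) :
  (forall a b, (q a < q b) = (p a < p b)) -> q = p.
Proof.
move=> qp; apply/permP=> a; apply: val_inj.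
by rewrite /= -card_perm_ltn -[RHS]card_perm_ltn; apply: eq_card => b; rewrite !inE qp.
Qed.

Lemma exists_std_perm d (T : orderType d) n (f : 'I_n -> T) : injective f ->
  exists s : 'S_n, forall a b, (s a < s b) = (f a < f b)%O.
Proof.
move=> f_inj; pose rank a := #|[set b | (f b < f a)%O]|.
have rank_lt a : rank a < n.
  rewrite -[n]card_ord -cardsT; apply: proper_card; apply/properP.
  by split; [exact: subsetT | exists a; rewrite ?inE ?ltxx].
have rank_mono a b : (f a < f b)%O -> rank a < rank b.
  move=> lt_ab; apply: proper_card; apply/properP; split; last first.
    by exists a; rewrite !inE ?ltxx.
  by apply/subsetP=> c; rewrite !inE => /lt_trans; apply.
have rankE a b : (rank a < rank b) = (f a < f b)%O.
  case: (ltgtP (f a) (f b)) => [/rank_mono -> // | /rank_mono lt_ba | /f_inj ->].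
    by apply/negbTE; rewrite -leqNgt ltnW.
  by rewrite ltnn.
have rank_inj : injective (fun a => Ordinal (rank_lt a)).
  move=> a b [] eq_ab; apply: f_inj; apply/eqP; rewrite eq_le !leNgt -!rankE.
  by rewrite eq_ab ltnn.
by exists (perm rank_inj) => a b; rewrite !permE rankE.
Qed.

Section CyclicEntry.
Variables (n : nat) (s : 'S_n).
Hypothesis n_gt0 : 0 < n.

Lemma cyc_entryE x : cyc_entry s x = s (Ordinal (ltn_pmod x n_gt0)).
Proof.
rewrite /cyc_entry; case: insubP => [y _ y_eq | ]; last by rewrite ltn_pmod.
by congr (val (s _)); apply: val_inj.
Qed.

Lemma cyc_entry_ltn x : cyc_entry s x < n.
Proof. by rewrite cyc_entryE. Qed.

Lemma cyc_entry_window_inj j a b : a < n -> b < n ->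
  cyc_entry s (j + a) = cyc_entry s (j + b) -> a = b.
Proof.
move=> lt_an lt_bn; rewrite !cyc_entryE => /val_inj /perm_inj [] /eqP.
by rewrite eqn_modDl !modn_small // => /eqP.
Qed.

Lemma cyc_entry_ltn_key d (T : orderType d) (key : nat -> T) :
    (forall a b : 'I_n, (s a < s b) = (key a < key b)%O) ->
  forall x y, (cyc_entry s x < cyc_entry s y) = (key (x %% n) < key (y %% n))%O.
Proof. by move=> s_key x y; rewrite !cyc_entryE s_key. Qed.

End CyclicEntry.

Lemma exists_window_min k (L : 'I_k) n (s : 'S_n) : k <= n ->
  exists2 q : 'S_k, q L = 0 :> nat & cyc_contains q s.
Proof.
move=> le_kn; have k_gt0 : 0 < k := leq_ltn_trans (leq0n L) (ltn_ord L).
have n_gt0 : 0 < n := leq_trans k_gt0 le_kn.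
pose x0 := (s^-1 (Ordinal n_gt0))%g.
pose j := Ordinal (ltn_pmod (x0 + n - L) n_gt0).
have window_inj : injective (fun a : 'I_k => cyc_entry s (j + a)).
  move=> a b /(cyc_entry_window_inj n_gt0) eq_ab; apply/val_inj/eq_ab.
    exact: leq_trans (ltn_ord a) le_kn.
  exact: leq_trans (ltn_ord b) le_kn.
have [q q_window] := exists_std_perm window_inj.
have window_L : cyc_entry s (j + L) = 0.
  rewrite (cyc_entryE _ n_gt0) (_ : Ordinal _ = x0) ?permKV //; apply: val_inj => /=.
  rewrite modnDml subnK ?modnDr ?modn_small //.
  exact: leq_trans (ltnW (leq_trans (ltn_ord L) le_kn)) (leq_addl _ _).
exists q; last by split=> //; exists j.
apply/eqP; rewrite -leqn0 leqNgt; apply/negP => lt0_qL.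
pose b := (q^-1 (Ordinal k_gt0))%g.
by have := q_window b L; rewrite /b permKV lt0_qL window_L.
Qed.

Lemma mem_Pi_min k (L : 'I_k) (q : 'S_k) : (q \in Pi_min k L.+1) = (q L == 0 :> nat).
Proof.
rewrite inE; apply/existsP/idP => [[a /andP [/eqP a_L q_a]] | q_L].
  by rewrite (_ : L = a) //; apply: val_inj.
by exists L; rewrite eqxx.
Qed.

Lemma Pi_min_unavoidable k (L : 'I_k) : unavoidable (Pi_min k L.+1).
Proof.
exists k => n le_kn s s_avoids; have [q q_L q_in_s] := exists_window_min L s le_kn.
by apply: (s_avoids q) => //; rewrite mem_Pi_min q_L.
Qed.

Definition perm_compl {n} (s : 'S_n) : 'S_n :=
  perm (inj_comp (@rev_ord_inj n) (@perm_inj _ s)).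

Lemma perm_complE n (s : 'S_n) x : perm_compl s x = rev_ord (s x).
Proof. by rewrite permE. Qed.

Lemma perm_complK n : involutive (@perm_compl n).
Proof. by move=> s; apply/permP => x; rewrite !perm_complE rev_ordK. Qed.

Lemma cyc_entry_compl n (s : 'S_n) x : cyc_entry (perm_compl s) x = n.-1 - cyc_entry s x.
Proof.
case: n s => [|n] s; first by rewrite /cyc_entry insubF.
by rewrite !(cyc_entryE _ (ltn0Sn n)) perm_complE /= subSS.
Qed.

Lemma cyc_contains_compl k (p : 'S_k) n (s : 'S_n) :
  cyc_contains p s -> cyc_contains (perm_compl p) (perm_compl s).
Proof.
case=> le_kn [j p_window]; split => //; exists j => a b.
have n_gt0 : 0 < n := leq_ltn_trans (leq0n j) (ltn_ord j).
have entry_le x : cyc_entry s x <= n.-1 by rewrite -ltnS prednK ?cyc_entry_ltn.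
by rewrite !cyc_entry_compl !perm_complE /= !ltn_sub2lE ?entry_le // p_window.
Qed.

Lemma unavoidable_compl k (Pi : {set 'S_k}) :
  unavoidable Pi -> unavoidable (perm_compl @: Pi).
Proof.
case=> N PiN; exists N => n le_Nn s s_avoids; apply: (PiN n le_Nn (perm_compl s)).
move=> p p_in /cyc_contains_compl; rewrite perm_complK; apply: s_avoids.
exact: imset_f.
Qed.

Lemma minimal_unavoidable_compl k (Pi : {set 'S_k}) :
  minimal_unavoidable Pi -> minimal_unavoidable (perm_compl @: Pi).
Proof.
case=> Pi_unavoidable Pi_minimal; split; first exact: unavoidable_compl.
move=> Pi' Pi'_proper /unavoidable_compl; apply: Pi_minimal.
have compl_inj : injective (@perm_compl k) := inv_inj (@perm_complK k).
have -> : Pi = perm_compl @: (perm_compl @: Pi).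
  by rewrite -imset_comp (eq_imset _ (@perm_complK k)) imset_id.
exact: imset_proper (in2W compl_inj) Pi'_proper.
Qed.

Lemma Pi_max_compl k i : Pi_max k i = perm_compl @: Pi_min k i.
Proof.
apply/setP => p; rewrite (can_imset_pre _ (@perm_complK k)) !inE.
apply: eq_existsb => a; rewrite perm_complE /=; congr (_ && _).
by rewrite subn_eq0; have := ltn_ord (p a); lia.
Qed.

Definition isolable k (Pi : {set 'S_k}) (p : 'S_k) : Prop :=
  forall N, exists n (s : 'S_n), N <= n /\ forall q, q \in Pi -> cyc_contains q s -> q = p.

Lemma minimal_unavoidable_isolable k (Pi : {set 'S_k}) :
  unavoidable Pi -> {in Pi, forall p, isolable Pi p} -> minimal_unavoidable Pi.
Proof.
move=> Pi_unavoidable Pi_isolable; split=> // Pi' /properP [sub_Pi' [p p_in p_notin]] [N Pi'N].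
have [n [s [le_Nn s_isolates]]] := Pi_isolable p p_in N.
apply: (Pi'N n le_Nn s) => q q_in /(s_isolates q (subsetP sub_Pi' q q_in)) eq_qp.
by rewrite -eq_qp q_in in p_notin.
Qed.

Lemma modn_ltn_double x d : x < d + d -> x %% d = if x < d then x else x - d.
Proof.
move=> lt_x2d; case: ifP => [/modn_small // | /negbT]; rewrite -leqNgt => le_dx.
by rewrite -{1}(subnK le_dx) modnDr modn_small // ltn_subLR.
Qed.

Section Construction.
Variables (k : nat) (L : 'I_k).

(* Position z of the constructed cyclic permutation is offset z %% k.+1 of
   block z %/ k.+1: offsets below k carry a copy of p, offset k is a
   separator, and entries are compared by block_key (tier, then block, then
   entry).  A window of length k missing offset
   L starts just after it, so its L-th place is at offset 2L+1 mod k+1, which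
   is the separator exactly when k = 2L+1; the separator's tier (top in that
   case, just above offset L otherwise) keeps the minimum of such a window off
   its L-th place. *)
Definition block_tier (r : nat) :=
  let other := if k == L.*2.+1 then 1 else 2 in
  if r == L then 0 else if r == k then 3 - other else other.

Lemma block_tier_aligned r : 1 < k -> r <= k ->
    (forall b, b < k -> b != L ->
       block_tier ((r + L) %% k.+1) <= block_tier ((r + b) %% k.+1)) ->
  r = 0.
Proof.
move=> k_gt1 le_rk tier_min; apply/eqP; apply: contraT => r_neq0.
have lt_Lk := ltn_ord L.
(* The window place at offset L when there is one (r <> L+1), else the
   separator or, if k = 2L+1, place 0: its tier is below that of place L. *)
pose b := if r <= L then L - r else if r == L.+1 then
            (if k == L.*2.+1 then 0 else k - r) else L + k.+1 - r.
have [lt_bk ne_bL] : b < k /\ b != L.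
  by rewrite /b; do ! case: ifP; lia.
have := tier_min b lt_bk ne_bL.
rewrite !modn_ltn_double /block_tier /b; try lia.
do ! case: ifP; lia.
Qed.

Variable p : 'S_k.

Definition block_entry (r : nat) : nat :=
  if insub r is Some a then val (p a) else k.

Definition block_key (z : nat) : nat *l (nat *l nat) :=
  (block_tier (z %% k.+1), (z %/ k.+1, block_entry (z %% k.+1))).

Lemma block_entry_inj r1 r2 : r1 <= k -> r2 <= k ->
  block_entry r1 = block_entry r2 -> r1 = r2.
Proof.
rewrite /block_entry => le_r1k le_r2k.
case: insubP => [a _ <- | ]; case: insubP => [b _ <- | ] => //=.
- by move=> /val_inj /perm_inj ->.
- by move=> _ eq_a; have := ltn_ord (p a); rewrite eq_a ltnn.
- by move=> _ eq_b; have := ltn_ord (p b); rewrite -eq_b ltnn.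
- by rewrite -!leqNgt => ge_r2k ge_r1k _; lia.
Qed.

Lemma block_key_inj : injective block_key.
Proof.
move=> z1 z2 [_ eq_div /block_entry_inj eq_mod].
by rewrite (divn_eq z1 k.+1) (divn_eq z2 k.+1) eq_div eq_mod // -ltnS ltn_mod.
Qed.

Lemma block_key_lt_tier z1 z2 :
  block_tier (z1 %% k.+1) < block_tier (z2 %% k.+1) -> (block_key z1 < block_key z2)%O.
Proof.
move=> lt_tier; rewrite /block_key ltxi_pair /= !leEnat.
by rewrite ltnW // leqNgt lt_tier.
Qed.

Hypothesis p_L : p L = 0 :> nat.

Lemma block_key_in_block t (a b : 'I_k) :
  (block_key (t * k.+1 + a) < block_key (t * k.+1 + b))%O = (p a < p b).
Proof.
have lt_ck (c : 'I_k) : c < k.+1 := ltnW (ltn_ord c).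
have keyE (c : 'I_k) : block_key (t * k.+1 + c) = (block_tier c, (t, val (p c))).
  by rewrite /block_key modnMDl divnMDl // modn_small // divn_small // addn0 /block_entry valK.
have p_gt0 (c : 'I_k) : c != L -> 0 < p c.
  by move=> ne_cL; rewrite lt0n -p_L; apply: contra ne_cL => /eqP /val_inj /perm_inj ->.
have tierE (c : 'I_k) : c != L -> block_tier c = if k == L.*2.+1 then 1 else 2.
  move=> ne_cL; have ne_cL_nat : (c == L :> nat) = false := negbTE ne_cL.
  by rewrite /block_tier ne_cL_nat ltn_eqF.
have tierL : block_tier L = 0 by rewrite /block_tier eqxx.
rewrite !keyE !ltxi_pair /= !leEnat !ltEnat leqnn /=.
case: (eqVneq a L) => [-> | ne_aL]; case: (eqVneq b L) => [-> | ne_bL].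
- by rewrite ltnn leqnn.
- by rewrite tierL p_L p_gt0 // implybT.
- by rewrite tierL p_L ltn0 tierE //; case: ifP.
- by rewrite !tierE // leqnn.
Qed.

Lemma block_perm_isolates m (s : 'S_(m * k.+1)) : 1 < k ->
    (forall a b : 'I_(m * k.+1), (s a < s b) = (block_key a < block_key b)%O) ->
  forall q : 'S_k, q L = 0 :> nat -> cyc_contains q s -> q = p.
Proof.
move=> k_gt1 s_key q q_L [le_kn [j q_window]].
set n := m * k.+1 in s s_key j q_window le_kn *.
have n_gt0 : 0 < n := leq_ltn_trans (leq0n j) (ltn_ord j).
have window_key a b :
    (q a < q b) = (block_key ((j + a) %% n) < block_key ((j + b) %% n))%O.
  by rewrite -q_window (cyc_entry_ltn_key n_gt0 s_key).
have window_tier (b : 'I_k) : b != L ->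
    block_tier ((j + L) %% k.+1) <= block_tier ((j + b) %% k.+1).
  move=> ne_bL; rewrite leqNgt; apply/negP.
  have dvd_kn : k.+1 %| n := dvdn_mull m (dvdnn k.+1).
  rewrite -(modn_dvdm (j + L) dvd_kn) -(modn_dvdm (j + b) dvd_kn).
  move=> /block_key_lt_tier.
  by rewrite -window_key q_L ltn0.
have j_aligned : j %% k.+1 = 0.
  apply: (block_tier_aligned k_gt1 (ltn_mod j k.+1)) => b lt_bk ne_bL.
  by rewrite !modnDml; apply: (window_tier (Ordinal lt_bk)).
set t := j %/ k.+1.
have window_in_block (a : 'I_k) : (j + a) %% n = t * k.+1 + a.
  have lt_tm : t < m by rewrite ltn_divLR.
  have jE : j = t * k.+1 :> nat by rewrite {1}(divn_eq j k.+1) j_aligned addn0.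
  rewrite jE modn_small // (leq_trans _ (_ : t.+1 * k.+1 <= n)) //.
    by rewrite mulSnr ltn_add2l ltnS ltnW.
  by rewrite leq_mul2r lt_tm orbT.
by apply: perm_ltn_inj => a b; rewrite window_key !window_in_block block_key_in_block.
Qed.

End Construction.

Lemma Pi_min_isolable k (L : 'I_k) : {in Pi_min k L.+1, forall p, isolable (Pi_min k L.+1) p}.
Proof.
move=> p; rewrite mem_Pi_min => /eqP p_L N.
have [le_k1 | k_gt1] := leqP k 1.
  exists N, 1%g; split=> // q _ _; apply: perm_ltn_inj => a b.
  by rewrite (_ : a = b) ?ltnn //; apply: ord_inj; have := ltn_ord a; have := ltn_ord b; lia.
have key_inj : injective (fun z : 'I_(N.+1 * k.+1) => block_key L p z).
  by move=> z1 z2 /block_key_inj /ord_inj.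
have [s s_key] := exists_std_perm key_inj.
exists (N.+1 * k.+1), s; split; first exact: leq_trans (leqnSn N) (leq_pmulr _ (ltn0Sn k)).
by move=> q; rewrite mem_Pi_min => /eqP q_L; apply: (block_perm_isolates p_L k_gt1 s_key).
Qed.

Lemma Pi_min_minimal_unavoidable k (L : 'I_k) : minimal_unavoidable (Pi_min k L.+1).
Proof.
apply: minimal_unavoidable_isolable; [exact: Pi_min_unavoidable | exact: Pi_min_isolable].
Qed.

Unset Implicit Arguments.

Theorem theorem6p1 (k i : nat) (hi : 1 <= i) (hik : i <= k) :
  minimal_unavoidable (Pi_min k i) /\ minimal_unavoidable (Pi_max k i).
Proof.
case: i hi hik => // L _ lt_Lk.
have Pi_min_minimal := Pi_min_minimal_unavoidable (Ordinal lt_Lk).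
by split=> //; rewrite Pi_max_compl; apply: minimal_unavoidable_compl.
Qed.
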